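(* Let $q(y,z|x)$ be a discrete memoryless broadcast channel with finite alphabets. Define the Marton sum-rate $$R_{\mathrm{sum}}=\sup_{p(u,v,w,x)}\Big[\min\{I(W;Y),I(W;Z)\}+I(U;Y|W)+I(V;Z|W)-I(U;V|W)\Big],$$ and for $\lambda\in[0,1]$ $$T_\lambda=\sup_{p(u,v,w,x)}\Big[\lambda I(W;Y)+(1-\lambda)I(W;Z)+I(U;Y|W)+I(V;Z|W)-I(U;V|W)\Big],$$ where both suprema range over all finite-alphabet random variables $(U,V,W,X)$ with $(U,V,W,X,Y,Z)\sim p(u,v,w,x)q(y,z|x)$. Then $R_{\mathrm{sum}}=\min_{\lambda\in[0,1]}T_\lambda$.
   Context: A two-receiver discrete memoryless broadcast channel has finite input alphabet $\mathcal X$, finite output alphabets $\mathcal Y,\mathcal Z$ and transition law $q(y,z|x)$. Mutual informations are computed under the stated joint distribution. *)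

From HB Require Import structures.
From mathcomp Require Import all_boot all_order all_algebra.
From mathcomp Require Import classical_sets reals ereal exp.
Set Implicit Arguments. Unset Strict Implicit. Unset Printing Implicit Defensive.
Import Order.TTheory GRing.Theory Num.Theory.
Local Open Scope ring_scope.

Section Info.
Variable R : realType.

Definition is_pmf (T : finType) (p : T -> R) : Prop :=
  (forall t, 0 <= p t) /\ \sum_(t : T) p t = 1.

Definition is_bc_channel (X Y Z : finType) (q : X -> Y -> Z -> R) : Prop :=
  (forall x y z, 0 <= q x y z) /\ (forall x, \sum_(y : Y) \sum_(z : Z) q x y z = 1).

Definition marg (S A : finType) (P : S -> R) (f : S -> A) (a : A) : R :=
  \sum_(s : S | f s == a) P s.

(* conditional mutual information I(A;B|C) (natural log; 0 log 0 = 0 since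
   the summand vanishes when p(a,b,c) = 0) *)
Definition cmi (S A B C : finType) (P : S -> R)
    (fa : S -> A) (fb : S -> B) (fc : S -> C) : R :=
  \sum_(t : A * B * C)
    let pabc := marg P (fun s => (fa s, fb s, fc s)) t in
    let pc := marg P fc t.2 in
    let pac := marg P (fun s => (fa s, fc s)) (t.1.1, t.2) in
    let pbc := marg P (fun s => (fb s, fc s)) (t.1.2, t.2) in
    pabc * ln (pabc * pc / (pac * pbc)).

Definition mi (S A B : finType) (P : S -> R) (fa : S -> A) (fb : S -> B) : R :=
  cmi P fa fb (fun _ => tt).

Variables (X Y Z : finType) (q : X -> Y -> Z -> R).

(* sample space (((u,v),w),x),(y,z)) with law p(u,v,w,x) q(y,z|x) *)
Definition joint (U V W : finType) (p : U * V * W * X -> R)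
    (s : (U * V * W * X) * (Y * Z)) : R :=
  p s.1 * q s.1.2 s.2.1 s.2.2.

Section RVs.
Variables U V W : finType.
Definition rvU (s : (U * V * W * X) * (Y * Z)) : U := s.1.1.1.1.
Definition rvV (s : (U * V * W * X) * (Y * Z)) : V := s.1.1.1.2.
Definition rvW (s : (U * V * W * X) * (Y * Z)) : W := s.1.1.2.
Definition rvY (s : (U * V * W * X) * (Y * Z)) : Y := s.2.1.
Definition rvZ (s : (U * V * W * X) * (Y * Z)) : Z := s.2.2.
End RVs.

Definition marton_obj (U V W : finType) (p : U * V * W * X -> R) : R :=
  let P := joint p in
  Num.min (mi P (@rvW U V W) (@rvY U V W)) (mi P (@rvW U V W) (@rvZ U V W))
  + cmi P (@rvU U V W) (@rvY U V W) (@rvW U V W)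
  + cmi P (@rvV U V W) (@rvZ U V W) (@rvW U V W)
  - cmi P (@rvU U V W) (@rvV U V W) (@rvW U V W).

Definition tlam_obj (lam : R) (U V W : finType) (p : U * V * W * X -> R) : R :=
  let P := joint p in
  lam * mi P (@rvW U V W) (@rvY U V W) + (1 - lam) * mi P (@rvW U V W) (@rvZ U V W)
  + cmi P (@rvU U V W) (@rvY U V W) (@rvW U V W)
  + cmi P (@rvV U V W) (@rvZ U V W) (@rvW U V W)
  - cmi P (@rvU U V W) (@rvV U V W) (@rvW U V W).

Definition R_sum : \bar R :=
  ereal_sup (EFin @` (fun r : R => exists (U V W : finType) (p : U * V * W * X -> R),
        is_pmf p /\ r = marton_obj p))%classic.

Definition T_lam (lam : R) : \bar R :=
  ereal_sup (EFin @` (fun r : R => exists (U V W : finType) (p : U * V * W * X -> R),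
        is_pmf p /\ r = tlam_obj lam p))%classic.
End Info.

From HB Require Import structures.
From mathcomp Require Import all_boot all_order all_algebra.
From mathcomp Require Import classical_sets reals ereal exp.
From mathcomp Require Import ring lra.
Import Order.TTheory GRing.Theory Num.Theory.
Local Open Scope ring_scope.
Set Implicit Arguments. Unset Strict Implicit. Unset Printing Implicit Defensive.

(* Each admissible [p(u,v,w,x)] gives the pair (I(W;Y) + C, I(W;Z) + C) with
   C = I(U;Y|W) + I(V;Z|W) - I(U;V|W); [R_sum] is the supremum of [min(a, b)] and
   [T_lam] that of [lam a + (1 - lam) b] over the set A of these pairs.  Time sharing,
   with the time-sharing index recorded in [W], makes C linear and I(W;Y), I(W;Z)
   concave under mixing, so every convex combination of points of A is dominated by a
   point of A.  For such a planar set max-min equals min-max: once [R_sum] is shifted to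
   0, the weight [lam = sup { b / (b - a) | (a, b) in A, a < b }] works for all of A,
   since otherwise mixing a point above the diagonal with one below it would produce a
   point of A with both coordinates positive. *)

Section PlanarMinimax.
Variable R : realType.
Local Open Scope classical_set_scope.

Definition dominated_convex (S : set (R * R)) :=
  forall s t (al : R), S s -> S t -> 0 < al < 1 ->
  exists2 u, S u & al * s.1 + (1 - al) * t.1 <= u.1 /\ al * s.2 + (1 - al) * t.2 <= u.2.

Section NonpositiveMin.
Variable S : set (R * R).
Hypotheses (S_dconvex : dominated_convex S)
  (S_min_le0 : forall s, S s -> Num.min s.1 s.2 <= 0).

Let S_le0 s : S s -> s.1 <= 0 \/ s.2 <= 0.
Proof. by move/S_min_le0; rewrite ge_min => /orP. Qed.

(* Mixing [s] and [t] with weight [(t.1 - t.2) / D] puts both coordinates at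
   [(t.1 * s.2 - t.2 * s.1) / D]. *)
Lemma dominated_convex_cross s t : S s -> S t -> s.1 < s.2 -> t.2 < t.1 ->
  t.1 * s.2 <= t.2 * s.1.
Proof.
move=> Ss St lt_s lt_t; rewrite leNgt; apply/negP => K_gt0.
pose D := (t.1 - t.2) + (s.2 - s.1).
have D_gt0 : 0 < D by rewrite addr_gt0 // subr_gt0.
pose al := (t.1 - t.2) / D.
have al01 : 0 < al < 1.
  by rewrite divr_gt0 ?subr_gt0 //= ltr_pdivrMr // mul1r ltrDl subr_gt0.
have [u Su [le_u1 le_u2]] := S_dconvex Ss St al01.
have e1 : al * s.1 + (1 - al) * t.1 = (t.1 * s.2 - t.2 * s.1) / D.
  by rewrite /al /D; field; rewrite gt_eqF.
have e2 : al * s.2 + (1 - al) * t.2 = (t.1 * s.2 - t.2 * s.1) / D.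
  by rewrite /al /D; field; rewrite gt_eqF.
have K_D_gt0 : 0 < (t.1 * s.2 - t.2 * s.1) / D by rewrite divr_gt0 // subr_gt0.
by rewrite e1 in le_u1; rewrite e2 in le_u2; case: (S_le0 Su); lra.
Qed.

Lemma dominated_convex_conv_le0 :
  exists2 lam : R, 0 <= lam <= 1 & forall s, S s -> lam * s.1 + (1 - lam) * s.2 <= 0.
Proof.
pose L := [set 0] `|` [set s.2 / (s.2 - s.1) | s in [set s | S s /\ s.1 < s.2]].
have L_le1 l : L l -> l <= 1.
  move=> [->|[s [Ss lt_s] <-]]; first exact: ler01.
  by rewrite ler_pdivrMr ?subr_gt0 // mul1r; case: (S_le0 Ss); lra.
have L_sup : has_sup L by split; [exists 0; left | exists 1 => l /L_le1].
pose lam := sup L.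
have lam_ge0 : 0 <= lam by apply: sup_upper_bound; last by left.
have lam_le1 : lam <= 1 by apply: ge_sup; [exists 0; left | exact: L_le1].
exists lam => [|s Ss]; first by rewrite lam_ge0 lam_le1.
case: (ltgtP s.1 s.2) => [lt_s|lt_s|eq_s]; last by rewrite -eq_s; case: (S_le0 Ss); nra.
- have : s.2 / (s.2 - s.1) <= lam by apply: sup_upper_bound; last by right; exists s.
  by rewrite ler_pdivrMr ?subr_gt0 //; nra.
- have s2_le0 : s.2 <= 0 by case: (S_le0 Ss); lra.
  suff : lam <= - s.2 / (s.1 - s.2).
    by rewrite ler_pdivlMr ?subr_gt0 //; clearbody lam; nra.
  apply: ge_sup; first by exists 0; left.
  move=> l [->|[t [St lt_t] <-]]; first by apply: divr_ge0; lra.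
  have := dominated_convex_cross St Ss lt_t lt_s.
  by rewrite ler_pdivrMr ?subr_gt0 // mulrAC ler_pdivlMr ?subr_gt0 //; nra.
Qed.

End NonpositiveMin.

Lemma dominated_convex_conv_le (S : set (R * R)) (r : R) : dominated_convex S ->
  (forall s, S s -> Num.min s.1 s.2 <= r) ->
  exists2 lam : R, 0 <= lam <= 1 & forall s, S s -> lam * s.1 + (1 - lam) * s.2 <= r.
Proof.
move=> S_dconvex S_min_le.
pose Sr := [set s | S (s.1 + r, s.2 + r)].
have Sr_dconvex : dominated_convex Sr.
  move=> s t al Ss St al01; have [u Su [le_u1 le_u2]] := S_dconvex _ _ _ Ss St al01.
  exists (u.1 - r, u.2 - r); first by rewrite /Sr /= !subrK -surjective_pairing.
  by move: le_u1 le_u2 => /=; split; nra.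
have Sr_min_le0 s : Sr s -> Num.min s.1 s.2 <= 0.
  by move/S_min_le; rewrite /= !ge_min => /orP[] ?; apply/orP; [left|right]; lra.
have [lam lam01 lam_le] := dominated_convex_conv_le0 Sr_dconvex Sr_min_le0.
exists lam => // s Ss; have : Sr (s.1 - r, s.2 - r).
  by rewrite /Sr /= !subrK -surjective_pairing.
by move/lam_le => /=; nra.
Qed.

Local Open Scope ereal_scope.

Lemma ereal_sup_min_le_conv (S : set (R * R)) (lam : R) : (0 <= lam <= 1)%R ->
  ereal_sup [set (Num.min s.1 s.2)%:E | s in S] <=
  ereal_sup [set (lam * s.1 + (1 - lam) * s.2)%:E | s in S].
Proof.
move=> /andP[lam_ge0 lam_le1]; apply: ge_ereal_sup => _ [s Ss <-].
apply: le_ereal_sup_tmp; exists (lam * s.1 + (1 - lam) * s.2)%:E; first by exists s.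
have min_le1 : (Num.min s.1 s.2 <= s.1)%R by rewrite ge_min lexx.
have min_le2 : (Num.min s.1 s.2 <= s.2)%R by rewrite ge_min lexx orbT.
by rewrite lee_fin; nra.
Qed.

Lemma dominated_convex_minimax (S : set (R * R)) : dominated_convex S ->
  exists2 lam : R, (0 <= lam <= 1)%R &
  ereal_sup [set (lam * s.1 + (1 - lam) * s.2)%:E | s in S] <=
  ereal_sup [set (Num.min s.1 s.2)%:E | s in S].
Proof.
move=> S_dconvex; set sup_min := ereal_sup _.
have min_le s : S s -> (Num.min s.1 s.2)%:E <= sup_min.
  by move=> Ss; apply: ereal_sup_ubound; exists s.
have lam0 : (0 <= (0 : R) <= 1)%R by rewrite lexx ler01.
clearbody sup_min; case: sup_min min_le => [r| |] min_le; last 2 first.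
- by exists 0%R => //; rewrite leey.
- exists 0%R => //; apply: ge_ereal_sup => x [s /min_le].
  by rewrite leeNy_eq.
have [lam lam01 lam_le] : exists2 lam : R, (0 <= lam <= 1)%R &
    forall s, S s -> (lam * s.1 + (1 - lam) * s.2 <= r)%R.
  by apply: dominated_convex_conv_le => // s /min_le; rewrite lee_fin.
by exists lam => //; apply: ge_ereal_sup => _ [s /lam_le Ss <-]; rewrite lee_fin.
Qed.

End PlanarMinimax.

Section Marginals.
Variable R : realType.

Lemma sum_split_images (T T1 T2 : finType) (e1 : T1 -> T) (e2 : T2 -> T) (F : T -> R) :
  injective e1 -> injective e2 -> (forall t1 t2, e1 t1 != e2 t2) ->
  (forall t, t \notin codom e1 -> t \notin codom e2 -> F t = 0) ->
  \sum_t F t = \sum_t1 F (e1 t1) + \sum_t2 F (e2 t2).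
Proof.
move=> inj_e1 inj_e2 e12 F0.
have sum_codom (T' : finType) (e : T' -> T) : injective e ->
    \sum_(t in codom e) F t = \sum_t' F (e t').
  move=> inj_e; rewrite -big_uniq /=; last by rewrite map_inj_uniq ?enum_uniq.
  by rewrite big_map big_enum.
rewrite (bigID (mem (codom e1))) /= (bigID (mem (codom e2)) (fun t => t \notin codom e1)) /=.
rewrite [X in _ + (_ + X)]big1 ?addr0; last by move=> t /andP[]; apply: F0.
rewrite sum_codom //; congr (_ + _); rewrite -(sum_codom _ e2) //; apply: eq_bigl => t.
case: (boolP (t \in codom e2)) => [/codomP[t2 ->]|]; rewrite ?andbF ?andbT //.
by apply/negP => /codomP[t1 /eqP]; rewrite eq_sym (negbTE (e12 t1 t2)).
Qed.

Lemma ratio_scale (a x y z w : R) : a != 0 ->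
  a * x * (a * y) / (a * z * (a * w)) = x * y / (z * w).
Proof.
move=> a0; have [zw0|zw0] := eqVneq (z * w) 0.
  by rewrite zw0 mulrACA [X in _ / X]mulrACA zw0 !mulr0 !invr0 !mulr0.
have z0 : z != 0 by apply: contra zw0 => /eqP ->; rewrite mul0r.
have w0 : w != 0 by apply: contra zw0 => /eqP ->; rewrite mulr0.
by field; rewrite a0 z0 w0.
Qed.

Variables (S : finType) (P : S -> R).

Lemma margE (T : finType) (f : S -> T) t :
  marg P f t = \sum_s P s * (f s == t)%:R.
Proof. by rewrite /marg big_mkcond; apply: eq_bigr => s _; case: eqP; rewrite ?mulr1 ?mulr0. Qed.

Lemma sum_marg_mul (T : finType) (f : S -> T) (G : T -> R) :
  \sum_t marg P f t * G t = \sum_s P s * G (f s).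
Proof.
under eq_bigr do rewrite margE big_distrl.
rewrite exchange_big; apply: eq_bigr => s _ /=.
rewrite (bigD1 (f s)) //= eqxx mulr1 big1 ?addr0 // => t.
by rewrite eq_sym => /negbTE ->; rewrite mulr0 mul0r.
Qed.

Lemma sum_marg (T : finType) (f : S -> T) : \sum_t marg P f t = \sum_s P s.
Proof.
have := sum_marg_mul f (fun _ => 1).
by under eq_bigr do rewrite mulr1; under [RHS]eq_bigr do rewrite mulr1.
Qed.

Lemma marg_cst (T : finType) (c : T) : marg P (fun _ => c) c = \sum_s P s.
Proof. by rewrite /marg (eq_bigl xpredT) // => s; rewrite eqxx. Qed.

Hypothesis P_ge0 : forall s, 0 <= P s.

Lemma marg_ge0 (T : finType) (f : S -> T) t : 0 <= marg P f t.
Proof. exact: sumr_ge0. Qed.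

Lemma marg_ge (T : finType) (f : S -> T) s : P s <= marg P f (f s).
Proof. by rewrite /marg (bigD1 s) //= lerDl sumr_ge0. Qed.

End Marginals.

Section InformationDensity.
Variable R : realType.

Definition cmi_density (S A B C : finType) (P : S -> R)
    (fa : S -> A) (fb : S -> B) (fc : S -> C) (s : S) : R :=
  ln (marg P (fun s => (fa s, fb s, fc s)) (fa s, fb s, fc s) * marg P fc (fc s) /
    (marg P (fun s => (fa s, fc s)) (fa s, fc s) * marg P (fun s => (fb s, fc s)) (fb s, fc s))).

Lemma cmiE (S A B C : finType) (P : S -> R) fa fb fc :
  @cmi R S A B C P fa fb fc = \sum_s P s * cmi_density P fa fb fc s.
Proof. by rewrite /cmi sum_marg_mul. Qed.

Lemma cmi_comp_inj (S A B C A' B' C' : finType) (P : S -> R)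
    (fa : S -> A) (fb : S -> B) (fc : S -> C)
    (ja : A -> A') (jb : B -> B') (jc : C -> C') :
  injective ja -> injective jb -> injective jc ->
  cmi P (ja \o fa) (jb \o fb) (jc \o fc) = cmi P fa fb fc.
Proof.
move=> inj_a inj_b inj_c; rewrite !cmiE; apply: eq_bigr => s _.
rewrite /cmi_density /marg; congr (_ * ln (_ * _ / (_ * _)));
  by apply: eq_bigl => s'; rewrite /= ?xpair_eqE ?(inj_eq inj_a) ?(inj_eq inj_b) ?(inj_eq inj_c).
Qed.

Lemma mi_comp_inj (S A B A' B' : finType) (P : S -> R) (fa : S -> A) (fb : S -> B)
    (ja : A -> A') (jb : B -> B') :
  injective ja -> injective jb -> mi P (ja \o fa) (jb \o fb) = mi P fa fb.
Proof.
move=> inj_a inj_b.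
exact: (cmi_comp_inj P fa fb (fun _ => tt) inj_a inj_b (@inj_id unit)).
Qed.

Lemma relative_entropy_ge0 (S T : finType) (P : S -> R) (f : S -> T) (Q : T -> R) :
  is_pmf P -> is_pmf Q -> (forall t, 0 < marg P f t -> 0 < Q t) ->
  0 <= \sum_s P s * ln (marg P f (f s) / Q (f s)).
Proof.
move=> [P_ge0 P_sum1] [Q_ge0 Q_sum1] Q_gt0.
rewrite -(sum_marg_mul P f (fun t => ln (marg P f t / Q t))).
apply: (@le_trans _ _ (\sum_t (marg P f t - Q t))).
  by rewrite sumrB sum_marg P_sum1 Q_sum1 subrr.
apply: ler_sum => t _; have := marg_ge0 P_ge0 f t; have := Q_ge0 t.
have := Q_gt0 t; set m := marg P f t; set y := Q t => y_gt0 y_ge0 m_ge0.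
have [->|m_neq0] := eqVneq m 0; first by rewrite mul0r sub0r oppr_le0.
have m_gt0 : 0 < m by rewrite lt_def m_neq0.
have {}y_gt0 := y_gt0 m_gt0.
have ln_le : ln (y / m) <= y / m - 1.
  have := @le_ln1Dx R (y / m - 1); rewrite addrCA subrr addr0; apply.
  by have := divr_gt0 y_gt0 m_gt0; lra.
rewrite -[m / y]invf_div lnV ?posrE ?divr_gt0 //.
have : m * (1 - y / m) <= m * - ln (y / m) by rewrite ler_wpM2l // lerNr opprB.
by rewrite mulrBr mulr1 mulrCA divff ?mulr1 // gt_eqF.
Qed.

End InformationDensity.

Definition mixture_of (R : realType) (S S1 S2 : finType) (P : S -> R)
    (a : R) (P1 : S1 -> R) (E1 : S1 -> S) (b : R) (P2 : S2 -> R) (E2 : S2 -> S) :=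
  forall g : S -> R,
    \sum_s P s * g s = a * \sum_s P1 s * g (E1 s) + b * \sum_s P2 s * g (E2 s).

Lemma mixture_ofC (R : realType) (S S1 S2 : finType) (P : S -> R)
    a (P1 : S1 -> R) E1 b (P2 : S2 -> R) E2 :
  mixture_of P a P1 E1 b P2 E2 -> mixture_of P b P2 E2 a P1 E1.
Proof. by move=> P_mix g; rewrite P_mix addrC. Qed.

Section MixtureLeft.
Variables (R : realType) (S S1 S2 : finType) (P : S -> R) (P1 : S1 -> R) (P2 : S2 -> R).
Variables (E1 : S1 -> S) (E2 : S2 -> S) (a b : R).
Hypothesis P_mix : mixture_of P a P1 E1 b P2 E2.

Lemma sum_mixture : \sum_s P s = a * \sum_s P1 s + b * \sum_s P2 s.
Proof.
have := P_mix (fun _ => 1); under eq_bigr do rewrite mulr1.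
by under [in RHS]eq_bigr do rewrite mulr1; under [X in _ + _ * X]eq_bigr do rewrite mulr1.
Qed.

Lemma marg_mixture_l (T : finType) (f : S -> T) t : (forall s2, f (E2 s2) != t) ->
  marg P f t = a * marg P1 (f \o E1) t.
Proof.
move=> f_E2; rewrite !margE P_mix [X in _ + b * X]big1 ?mulr0 ?addr0 //.
by move=> s _; rewrite (negbTE (f_E2 s)) mulr0.
Qed.

Lemma cmi_density_mixture_l (A B C : finType) (fa : S -> A) (fb : S -> B) (fc : S -> C) :
  (forall s1 s2, fc (E1 s1) != fc (E2 s2)) -> a != 0 -> forall s,
  cmi_density P fa fb fc (E1 s) = cmi_density P1 (fa \o E1) (fb \o E1) (fc \o E1) s.
Proof.
move=> fc_sep a_neq0 s; rewrite /cmi_density !marg_mixture_l ?ratio_scale // => s2;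
by rewrite ?xpair_eqE [_ == fc _]eq_sym (negbTE (fc_sep s s2)) ?andbF.
Qed.

Lemma mi_density_mixture_l (W T : finType) (fw : S -> W) (fy : S -> T) s :
  (forall s1 s2, fw (E1 s1) != fw (E2 s2)) -> is_pmf P1 -> \sum_s P s = 1 -> a != 0 ->
  0 < P1 s -> 0 < marg P (fun s => (fy s, tt)) (fy (E1 s), tt) ->
  cmi_density P fw fy (fun _ => tt) (E1 s) =
  cmi_density P1 (fw \o E1) (fy \o E1) (fun _ => tt) s +
  ln (marg P1 (fun s => (fy (E1 s), tt)) (fy (E1 s), tt) /
      marg P (fun s => (fy s, tt)) (fy (E1 s), tt)).
Proof.
move=> fw_sep [P1_ge0 P1_sum1] P_sum1 a_neq0 P1s_gt0 Q_gt0.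
have marg1_gt0 (T' : finType) (f : S1 -> T') : 0 < marg P1 f (f s).
  exact: lt_le_trans (marg_ge P1_ge0 f s).
rewrite /cmi_density (@marg_mixture_l _ (fun s => (fw s, fy s, tt))); last first.
  by move=> s2; rewrite !xpair_eqE [_ == fw _]eq_sym (negbTE (fw_sep s s2)).
rewrite (@marg_mixture_l _ (fun s => (fw s, tt))); last first.
  by move=> s2; rewrite !xpair_eqE [_ == fw _]eq_sym (negbTE (fw_sep s s2)).
rewrite !marg_cst P_sum1 P1_sum1 -lnM ?posrE ?divr_gt0 ?mulr_gt0 //; congr ln.
by rewrite /comp /=; field; rewrite a_neq0 !gt_eqF //; apply: marg1_gt0.
Qed.

(* The defect is the relative entropy of the output law of [P1] w.r.t. that of [P]. *)
Lemma sum_mi_density_mixture_l (W T : finType) (fw : S -> W) (fy : S -> T) :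
  (forall s1 s2, fw (E1 s1) != fw (E2 s2)) -> is_pmf P1 -> is_pmf P2 ->
  0 < a -> 0 <= b -> a + b = 1 ->
  \sum_s P1 s * cmi_density P1 (fw \o E1) (fy \o E1) (fun _ => tt) s <=
  \sum_s P1 s * cmi_density P fw fy (fun _ => tt) (E1 s).
Proof.
move=> fw_sep P1_pmf [P2_ge0 P2_sum1] a_gt0 b_ge0 ab1; have [P1_ge0 P1_sum1] := P1_pmf.
pose Q t := marg P (fun s => (fy s, tt)) t.
have P_sum1 : \sum_s P s = 1 by rewrite sum_mixture P1_sum1 P2_sum1 !mulr1.
have Q_ge t : a * marg P1 (fun s => (fy (E1 s), tt)) t <= Q t.
  rewrite /Q !margE P_mix; apply: ler_wpDr => //; apply: mulr_ge0 => //.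
  by apply: sumr_ge0 => s _; rewrite mulr_ge0.
have Q_gt0 t : 0 < marg P1 (fun s => (fy (E1 s), tt)) t -> 0 < Q t.
  by move=> m_gt0; apply: lt_le_trans (Q_ge t); rewrite mulr_gt0.
have Q_pmf : is_pmf Q.
  split; last by rewrite /Q sum_marg.
  by move=> t; apply: le_trans (Q_ge t); apply: mulr_ge0; [exact: ltW | exact: marg_ge0].
rewrite -subr_ge0 -sumrB.
suff -> : \sum_s (P1 s * cmi_density P fw fy (fun _ => tt) (E1 s) -
    P1 s * cmi_density P1 (fw \o E1) (fy \o E1) (fun _ => tt) s) =
    \sum_s P1 s * ln (marg P1 (fun s => (fy (E1 s), tt)) (fy (E1 s), tt) / Q (fy (E1 s), tt)).
  exact: relative_entropy_ge0 P1_pmf Q_pmf Q_gt0.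
apply: eq_bigr => s _; rewrite -mulrBr.
have [->|P1s_neq0] := eqVneq (P1 s) 0; first by rewrite !mul0r.
have P1s_gt0 : 0 < P1 s by rewrite lt_def P1s_neq0 P1_ge0.
rewrite (mi_density_mixture_l fw_sep P1_pmf P_sum1) ?gt_eqF //.
  by rewrite addrAC subrr add0r.
by apply: Q_gt0; apply: lt_le_trans (marg_ge P1_ge0 _ s).
Qed.

End MixtureLeft.

Section MixtureBoth.
Variables (R : realType) (S S1 S2 : finType) (P : S -> R) (P1 : S1 -> R) (P2 : S2 -> R).
Variables (E1 : S1 -> S) (E2 : S2 -> S) (a b : R).
Hypothesis P_mix : mixture_of P a P1 E1 b P2 E2.

Lemma cmi_mixture (A B C : finType) (fa : S -> A) (fb : S -> B) (fc : S -> C) :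
  (forall s1 s2, fc (E1 s1) != fc (E2 s2)) -> a != 0 -> b != 0 ->
  cmi P fa fb fc = a * cmi P1 (fa \o E1) (fb \o E1) (fc \o E1)
                 + b * cmi P2 (fa \o E2) (fb \o E2) (fc \o E2).
Proof.
move=> fc_sep a_neq0 b_neq0; rewrite !cmiE P_mix.
congr (a * _ + b * _); apply: eq_bigr => s _.
  by rewrite (cmi_density_mixture_l P_mix).
rewrite (cmi_density_mixture_l (mixture_ofC P_mix)) // => s2 s1.
by rewrite eq_sym.
Qed.

Lemma mi_mixture_ge (W T : finType) (fw : S -> W) (fy : S -> T) :
  (forall s1 s2, fw (E1 s1) != fw (E2 s2)) -> is_pmf P1 -> is_pmf P2 ->
  0 < a -> 0 < b -> a + b = 1 ->
  a * mi P1 (fw \o E1) (fy \o E1) + b * mi P2 (fw \o E2) (fy \o E2) <= mi P fw fy.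
Proof.
move=> fw_sep P1_pmf P2_pmf a_gt0 b_gt0 ab1; rewrite /mi !cmiE P_mix.
apply: lerD; rewrite ler_pM2l //.
  exact: (sum_mi_density_mixture_l P_mix fy fw_sep P1_pmf P2_pmf a_gt0 (ltW b_gt0) ab1).
apply: (sum_mi_density_mixture_l (mixture_ofC P_mix) fy _ P2_pmf P1_pmf b_gt0 (ltW a_gt0)).
  by move=> s2 s1; rewrite eq_sym.
by rewrite addrC.
Qed.

End MixtureBoth.

Section RatePairs.
Local Open Scope classical_set_scope.
Variables (R : realType) (X Y Z : finType) (q : X -> Y -> Z -> R).

Local Notation U_ := (@rvU X Y Z _ _ _).
Local Notation V_ := (@rvV X Y Z _ _ _).
Local Notation W_ := (@rvW X Y Z _ _ _).
Local Notation Y_ := (@rvY X Y Z _ _ _).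
Local Notation Z_ := (@rvZ X Y Z _ _ _).

Definition private_rate (U V W : finType) (p : U * V * W * X -> R) : R :=
  cmi (joint q p) U_ Y_ W_ + cmi (joint q p) V_ Z_ W_ - cmi (joint q p) U_ V_ W_.

Definition rate_pair (U V W : finType) (p : U * V * W * X -> R) : R * R :=
  (mi (joint q p) W_ Y_ + private_rate p, mi (joint q p) W_ Z_ + private_rate p).

Lemma marton_objE (U V W : finType) (p : U * V * W * X -> R) :
  marton_obj q p = Num.min (rate_pair p).1 (rate_pair p).2.
Proof. by rewrite /marton_obj /= -addr_minl /private_rate; ring. Qed.

Lemma tlam_objE (lam : R) (U V W : finType) (p : U * V * W * X -> R) :
  tlam_obj q lam p = lam * (rate_pair p).1 + (1 - lam) * (rate_pair p).2.
Proof. by rewrite /tlam_obj /= /private_rate; ring. Qed.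

Definition achievable_pairs : set (R * R) :=
  [set s | exists (U V W : finType) (p : U * V * W * X -> R), is_pmf p /\ s = rate_pair p].

Lemma R_sumE :
  R_sum q = ereal_sup [set (Num.min s.1 s.2)%:E | s in achievable_pairs].
Proof.
rewrite /R_sum; congr ereal_sup; apply/seteqP; split=> x [r].
  move=> [U [V [W [p [p_pmf ->]]]]] <-; exists (rate_pair p); last by rewrite marton_objE.
  by exists U, V, W, p.
move=> [U [V [W [p [p_pmf ->]]]]] <-; exists (Num.min (rate_pair p).1 (rate_pair p).2) => //.
by exists U, V, W, p; rewrite marton_objE.
Qed.

Lemma T_lamE (lam : R) : T_lam q lam =
  ereal_sup [set (lam * s.1 + (1 - lam) * s.2)%:E | s in achievable_pairs].
Proof.
rewrite /T_lam; congr ereal_sup; apply/seteqP; split=> x [r].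
  move=> [U [V [W [p [p_pmf ->]]]]] <-; exists (rate_pair p); last by rewrite tlam_objE.
  by exists U, V, W, p.
move=> [U [V [W [p [p_pmf ->]]]]] <-.
exists (lam * (rate_pair p).1 + (1 - lam) * (rate_pair p).2) => //.
by exists U, V, W, p; rewrite tlam_objE.
Qed.

Hypothesis q_bc : is_bc_channel q.

Lemma joint_pmf (U V W : finType) (p : U * V * W * X -> R) : is_pmf p -> is_pmf (joint q p).
Proof.
case: q_bc => q_ge0 q_sum1 [p_ge0 p_sum1]; split; first by move=> s; rewrite mulr_ge0.
have sum_pair (I J : finType) (F : I * J -> R) : \sum_ij F ij = \sum_i \sum_j F (i, j).
  by rewrite pair_bigA; apply: eq_bigr => -[].
rewrite sum_pair -p_sum1; apply: eq_bigr => x _.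
by rewrite /joint /= -big_distrr /= sum_pair q_sum1 mulr1.
Qed.

Section TimeSharing.
Variables (U1 V1 W1 U2 V2 W2 : finType).
Variables (p1 : U1 * V1 * W1 * X -> R) (p2 : U2 * V2 * W2 * X -> R) (al : R).
Hypotheses (p1_pmf : is_pmf p1) (p2_pmf : is_pmf p2) (al_gt0 : 0 < al) (al_lt1 : al < 1).

Local Notation input := ((U1 + U2) * (V1 + V2) * (W1 + W2) * X)%type.

Definition tag1 (x : U1 * V1 * W1 * X) : input := (inl x.1.1.1, inl x.1.1.2, inl x.1.2, x.2).
Definition tag2 (x : U2 * V2 * W2 * X) : input := (inr x.1.1.1, inr x.1.1.2, inr x.1.2, x.2).

(* The two strategies get disjoint alphabets, so the tag of [W] reveals which one is used. *)
Definition time_sharing (i : input) : R :=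
  match i with
  | (inl u, inl v, inl w, x) => al * p1 (u, v, w, x)
  | (inr u, inr v, inr w, x) => (1 - al) * p2 (u, v, w, x)
  | _ => 0
  end.

Definition tag1_out (s : U1 * V1 * W1 * X * (Y * Z)) := (tag1 s.1, s.2).
Definition tag2_out (s : U2 * V2 * W2 * X * (Y * Z)) := (tag2 s.1, s.2).

Lemma joint_time_sharing :
  mixture_of (joint q time_sharing) al (joint q p1) tag1_out (1 - al) (joint q p2) tag2_out.
Proof.
move=> g; rewrite (sum_split_images (e1 := tag1_out) (e2 := tag2_out)).
- rewrite !big_distrr; congr (_ + _); apply: eq_bigr => -[[[[u v] w] x] yz] _;
  by rewrite /joint /= !mulrA.
- by move=> [[[[u v] w] x] yz] [[[[u' v'] w'] x'] yz'] [-> -> -> -> ->].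
- by move=> [[[[u v] w] x] yz] [[[[u' v'] w'] x'] yz'] [-> -> -> -> ->].
- by [].
move=> [[[[u v] w] x] yz] not1 not2.
case: u v w not1 not2 => u [] v [] w not1 not2; rewrite /joint /= ?mul0r //.
  by move: not1; rewrite (_ : (_, _) = tag1_out (u, v, w, x, yz)) // codom_f.
by move: not2; rewrite (_ : (_, _) = tag2_out (u, v, w, x, yz)) // codom_f.
Qed.

Lemma time_sharing_pmf : is_pmf time_sharing.
Proof.
case: p1_pmf p2_pmf => [p1_ge0 p1_sum1] [p2_ge0 p2_sum1]; split.
  move=> [[[[u|u] [v|v]] [w|w]] x] //=; apply: mulr_ge0;
    rewrite ?subr_ge0; by [apply: ltW | apply: p1_ge0 | apply: p2_ge0].
rewrite (sum_split_images (e1 := tag1) (e2 := tag2)).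
- transitivity (al * \sum_x p1 x + (1 - al) * \sum_x p2 x).
    by rewrite !big_distrr; congr (_ + _); apply: eq_bigr => -[[[u v] w] x].
  by rewrite p1_sum1 p2_sum1; ring.
- by move=> [[[u v] w] x] [[[u' v'] w'] x'] [-> -> -> ->].
- by move=> [[[u v] w] x] [[[u' v'] w'] x'] [-> -> -> ->].
- by [].
move=> [[[u v] w] x] not1 not2.
case: u v w not1 not2 => u [] v [] w not1 not2 //.
  by move: not1; rewrite (_ : (_, _) = tag1 (u, v, w, x)) // codom_f.
by move: not2; rewrite (_ : (_, _) = tag2 (u, v, w, x)) // codom_f.
Qed.

Lemma private_rate_time_sharing :
  private_rate time_sharing = al * private_rate p1 + (1 - al) * private_rate p2.
Proof.
have al_neq0 : al != 0 by rewrite gt_eqF.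
have al'_neq0 : 1 - al != 0 by rewrite gt_eqF // subr_gt0.
rewrite /private_rate !(cmi_mixture joint_time_sharing) //.
rewrite !(cmi_comp_inj _ U_ Y_ W_ inl_inj (@inj_id _) inl_inj).
rewrite !(cmi_comp_inj _ U_ Y_ W_ inr_inj (@inj_id _) inr_inj).
rewrite !(cmi_comp_inj _ V_ Z_ W_ inl_inj (@inj_id _) inl_inj).
rewrite !(cmi_comp_inj _ V_ Z_ W_ inr_inj (@inj_id _) inr_inj).
rewrite !(cmi_comp_inj _ U_ V_ W_ inl_inj inl_inj inl_inj).
rewrite !(cmi_comp_inj _ U_ V_ W_ inr_inj inr_inj inr_inj).
by ring.
Qed.

Lemma rate_pair_time_sharing :
  al * (rate_pair p1).1 + (1 - al) * (rate_pair p2).1 <= (rate_pair time_sharing).1 /\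
  al * (rate_pair p1).2 + (1 - al) * (rate_pair p2).2 <= (rate_pair time_sharing).2.
Proof.
have W_sep s1 s2 : W_ (tag1_out s1) != W_ (tag2_out s2) by [].
have al'_gt0 : 0 < 1 - al by rewrite subr_gt0.
have mi_ge := mi_mixture_ge joint_time_sharing _ W_sep (joint_pmf p1_pmf) (joint_pmf p2_pmf)
  al_gt0 al'_gt0 (subrKC _ _).
rewrite /rate_pair /= private_rate_time_sharing; split.
- have := mi_ge _ Y_.
  rewrite (mi_comp_inj _ W_ Y_ inl_inj (@inj_id _)) (mi_comp_inj _ W_ Y_ inr_inj (@inj_id _)).
  lra.
- have := mi_ge _ Z_.
  rewrite (mi_comp_inj _ W_ Z_ inl_inj (@inj_id _)) (mi_comp_inj _ W_ Z_ inr_inj (@inj_id _)).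
  lra.
Qed.

End TimeSharing.

Lemma achievable_pairs_dominated_convex : dominated_convex achievable_pairs.
Proof.
move=> _ _ al [U1 [V1 [W1 [p1 [p1_pmf ->]]]]] [U2 [V2 [W2 [p2 [p2_pmf ->]]]]].
move=> /andP[al_gt0 al_lt1]; exists (rate_pair (time_sharing p1 p2 al)).
  by exists _, _, _, (time_sharing p1 p2 al); split; first exact: time_sharing_pmf.
exact: rate_pair_time_sharing.
Qed.

End RatePairs.

Theorem claim2 (R : realType) (X Y Z : finType) (q : X -> Y -> Z -> R) :
  is_bc_channel q ->
  (exists2 lam : R, 0 <= lam <= 1 & R_sum q = T_lam q lam) /\
  (forall lam : R, 0 <= lam <= 1 -> (R_sum q <= T_lam q lam)%E).
Proof.
move=> q_bc; rewrite R_sumE; split => [|lam lam01]; last first.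
  by rewrite T_lamE ereal_sup_min_le_conv.
have [lam lam01 le_conv] :=
  dominated_convex_minimax (achievable_pairs_dominated_convex q_bc).
by exists lam => //; apply/le_anti; rewrite T_lamE le_conv ereal_sup_min_le_conv.
Qed.
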